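(* For both Mixing methods $M$ (under the non-degeneracy assumption) and $M_\theta$ (no assumption), there is a constant $\tau>0$ such that, for their normalizers $y^*=y(V^* )$ and $y=y(V)$, $\|y-y^*\|^2\le\tau(f(V)-f^* )$.
   Context: Let $C\in\mathbb{R}^{n\times n}$ be symmetric with columns $c_i$ and $c_{ii}=0$, $f(V)=\langle C,V^TV\rangle$ over $V\in\mathbb{R}^{k\times n}$ with unit-norm columns ($\|\cdot\|$ the Euclidean norm), $V^*$ a global optimum of the SDP $\min_{X\succeq0}\langle C,X\rangle$ s.t. $X_{ii}=1$, and $f^*$ its optimal value. With $g_i=\sum_{j<i}c_{ij}\hat v_j+\sum_{j>i}c_{ij}v_j$ computed during one cyclic pass, the Mixing method $M$ uses normalizer $y_i=\|g_i\|$ and update $\hat v_i=-g_i/y_i$; the step-size version $M_\theta$, with $\theta\in(0,1/\max_i\|c_i\|_1)$ ($\|\cdot\|_1$ the $1$-norm), uses $y_i=\|v_i-\theta g_i\|$ and $\hat v_i=(v_i-\theta g_i)/y_i$. Non-degeneracy assumption (for $M$): all $\|g_i\|\ge\delta>0$ throughout. *)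

From mathcomp Require Import all_boot all_order all_algebra.
From mathcomp Require Import reals.
Set Implicit Arguments. Unset Strict Implicit. Unset Printing Implicit Defensive.
Import Order.TTheory GRing.Theory Num.Theory.
Local Open Scope ring_scope.

Section MixingDefs.
Variable R : realType.

Definition enorm (k : nat) (v : 'cV[R]_k) : R := Num.sqrt (\sum_(a < k) v a 0 ^+ 2).

Definition sqdist (n : nat) (y z : 'I_n -> R) : R := \sum_(i < n) (y i - z i) ^+ 2.

Definition frob (n : nat) (C X : 'M[R]_n) : R := \sum_(i < n) \sum_(j < n) C i j * X i j.

Definition fobj (k n : nat) (C : 'M[R]_n) (V : 'M[R]_(k, n)) : R := frob C (V^T *m V).

Definition unit_cols (k n : nat) (V : 'M[R]_(k, n)) : Prop :=
  forall i : 'I_n, enorm (col i V) = 1.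

Definition psd (n : nat) (X : 'M[R]_n) : Prop :=
  X^T = X /\ forall u : 'cV[R]_n, 0 <= (u^T *m X *m u) 0 0.

Definition sdp_opt (k n : nat) (C : 'M[R]_n) (Vs : 'M[R]_(k, n)) : Prop :=
  unit_cols Vs /\
  forall X : 'M[R]_n, psd X -> (forall i, X i i = 1) -> fobj C Vs <= frob C X.

(* g_i computed from the current (partially updated) matrix W:
   columns j < i already updated (hat v_j), columns j > i original *)
Definition gvec (k n : nat) (C : 'M[R]_n) (W : 'M[R]_(k, n)) (i : 'I_n) : 'cV[R]_k :=
  \sum_(j < n | j != i) C i j *: col j W.

(* An update rule: given v_i and g_i, returns the un-normalized vector u_i;
   the normalizer is y_i = ||u_i|| and hat v_i = u_i / y_i. *)
Definition rule_M (k : nat) (v g : 'cV[R]_k) : 'cV[R]_k := - g.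
Definition rule_Mtheta (theta : R) (k : nat) (v g : 'cV[R]_k) : 'cV[R]_k := v - theta *: g.

Definition step (k n : nat) (rule : 'cV[R]_k -> 'cV[R]_k -> 'cV[R]_k)
  (C : 'M[R]_n) (W : 'M[R]_(k, n)) (i : 'I_n) : 'M[R]_(k, n) :=
  let u := rule (col i W) (gvec C W i) in
  \matrix_(a < k, j < n) (if j == i then (enorm u)^-1 * u a 0 else W a j).

Definition state (k n : nat) (rule : 'cV[R]_k -> 'cV[R]_k -> 'cV[R]_k)
  (C : 'M[R]_n) (V : 'M[R]_(k, n)) (i : 'I_n) : 'M[R]_(k, n) :=
  foldl (step rule C) V (take i (enum 'I_n)).

Definition gpass (k n : nat) (rule : 'cV[R]_k -> 'cV[R]_k -> 'cV[R]_k)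
  (C : 'M[R]_n) (V : 'M[R]_(k, n)) (i : 'I_n) : 'cV[R]_k :=
  gvec C (state rule C V i) i.

Definition ynorm (k n : nat) (rule : 'cV[R]_k -> 'cV[R]_k -> 'cV[R]_k)
  (C : 'M[R]_n) (V : 'M[R]_(k, n)) (i : 'I_n) : R :=
  let W := state rule C V i in enorm (rule (col i W) (gvec C W i)).

Definition nondeg (k n : nat) (C : 'M[R]_n) (V : 'M[R]_(k, n)) (delta : R) : Prop :=
  forall i, delta <= enorm (gpass (@rule_M k) C V i).

Definition maxcol1 (n : nat) (C : 'M[R]_n) : R :=
  \big[Num.max/0]_(i < n) \sum_(j < n) `|C j i|.

End MixingDefs.

(* Put G* = Vs^T Vs, λ_i = - Σ_j c_ij G*_ij and S = C + diag λ.  Optimality of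
   Vs makes S positive semidefinite: for any u the curve
   X(t) = D(t) G* D(t) + φ(t) φ(t)^T, with D and φ rational in t, stays
   feasible and <C, X(t)> = f* + 2 t^2 (2 u^T S u + O(t^2)).  Since V has unit
   columns, the gap f(V) - f* is the sum of r^T S r over the rows r of V, so
   the columns of V S are O(sqrt gap).  Both methods compute
   u_i = a_i v_i - κ (g_i + λ_i v_i) with a_i >= 0, and g_i + λ_i v_i is the
   i-th column of V S up to the columns already updated in the pass; a discrete
   Gronwall estimate along the pass bounds these, and at V* everything
   vanishes, so y*_i = a_i and |y_i - y*_i| = O(sqrt gap). *)

From mathcomp Require Import all_boot all_order all_algebra.
From mathcomp Require Import reals ring lra.
Set Implicit Arguments. Unset Strict Implicit. Unset Printing Implicit Defensive.
Import Order.TTheory GRing.Theory Num.Theory.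
Local Open Scope ring_scope.

Lemma mx_symE (T : Type) m (A : 'M[T]_m) i j : A^T = A -> A i j = A j i.
Proof. by move=> sA; rewrite -[in LHS]sA mxE. Qed.

Section MxForm.
Variables (R : realFieldType) (m : nat).
Implicit Types (S : 'M[R]_m) (x y z : 'cV[R]_m).

Definition mxform S x y : R := (x^T *m S *m y) 0 0.

Lemma mxformDl S x1 x2 y : mxform S (x1 + x2) y = mxform S x1 y + mxform S x2 y.
Proof. by rewrite /mxform linearD /= !mulmxDl mxE. Qed.

Lemma mxformDr S x y1 y2 : mxform S x (y1 + y2) = mxform S x y1 + mxform S x y2.
Proof. by rewrite /mxform !mulmxDr mxE. Qed.

Lemma mxformZl S s x y : mxform S (s *: x) y = s * mxform S x y.
Proof. by rewrite /mxform linearZ /= -!scalemxAl mxE. Qed.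

Lemma mxformZr S s x y : mxform S x (s *: y) = s * mxform S x y.
Proof. by rewrite /mxform -!scalemxAr mxE. Qed.

Lemma mxformC S x y : S^T = S -> mxform S x y = mxform S y x.
Proof.
move=> sS; rewrite /mxform.
have -> : (x^T *m S *m y) 0 0 = (x^T *m S *m y)^T 0 0 by rewrite [RHS]mxE.
by rewrite !trmx_mul trmxK sS mulmxA.
Qed.

Lemma mxformE S x y : mxform S x y = \sum_i \sum_j x i 0 * S i j * y j 0.
Proof.
rewrite /mxform mxE; under eq_bigr => j _ do rewrite mxE big_distrl /=.
rewrite exchange_big; apply: eq_bigr => i _; apply: eq_bigr => j _.
by rewrite mxE.
Qed.

Lemma mxform1E x y : mxform 1%:M x y = \sum_a x a 0 * y a 0.
Proof. by rewrite /mxform mulmx1 mxE; apply: eq_bigr => a _; rewrite mxE. Qed.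

Lemma mxformD S1 S2 x y : mxform (S1 + S2) x y = mxform S1 x y + mxform S2 x y.
Proof. by rewrite /mxform mulmxDr mulmxDl mxE. Qed.

Lemma mxform_diag (d : 'rV[R]_m) x :
  mxform (diag_mx d) x x = \sum_i d 0 i * x i 0 ^+ 2.
Proof.
rewrite /mxform mul_mx_diag mxE; apply: eq_bigr => i _; rewrite !mxE; ring.
Qed.

Lemma mxform_delta S i : mxform S (delta_mx i 0) (delta_mx i 0) = S i i.
Proof. by rewrite /mxform trmx_delta -rowE -colE !mxE. Qed.

Lemma mxform1_ge0 x : 0 <= mxform 1%:M x x.
Proof. by rewrite mxform1E; apply: sumr_ge0 => a _; rewrite -expr2 sqr_ge0. Qed.

Lemma discriminant_le (a b c : R) : 0 <= c ->
  (forall s, 0 <= a + 2 * s * b + s ^+ 2 * c) -> b ^+ 2 <= a * c.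
Proof.
move=> c_ge0 pos; have [c0|c_neq0] := eqVneq c 0.
  rewrite c0 mulr0; have [->|b_neq0] := eqVneq b 0; first by rewrite expr0n.
  have := pos (- (a + 1) / (2 * b)); rewrite c0 mulr0 addr0.
  have -> : 2 * (- (a + 1) / (2 * b)) * b = - (a + 1) by field.
  lra.
have c_gt0 : 0 < c by rewrite lt_def c_neq0.
have := pos (- b / c).
have -> : a + 2 * (- b / c) * b + (- b / c) ^+ 2 * c = (a * c - b ^+ 2) / c.
  by field.
rewrite pmulr_lge0 ?invr_gt0 //; lra.
Qed.

Lemma mxform_le_abs_sum S z :
  mxform S z z <= (\sum_i \sum_j `|S i j|) * mxform 1%:M z z.
Proof.
set N := mxform 1%:M z z.
have sqr_le_N i : `|z i 0| ^+ 2 <= N.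
  rewrite real_normK ?num_real // /N mxform1E (bigD1 i) //= -expr2 lerDl.
  by apply: sumr_ge0 => a _; rewrite -expr2 sqr_ge0.
rewrite mxformE mulr_suml; apply: ler_sum => i _; rewrite mulr_suml.
apply: ler_sum => j _; apply: le_trans (ler_norm _) _.
rewrite (mulrC _ (S i j)) -mulrA !normrM; apply: ler_wpM2l => //.
have := sqr_le_N i; have := sqr_le_N j; have := sqr_ge0 (`|z i 0| - `|z j 0|).
nra.
Qed.

Section Psd.
Variable S : 'M[R]_m.
Hypotheses (S_sym : S^T = S) (S_psd : forall z, 0 <= mxform S z z).

Lemma mxform_cauchy_schwarz x y :
  mxform S x y ^+ 2 <= mxform S x x * mxform S y y.
Proof.
apply: discriminant_le => // s; have := S_psd (x + s *: y).
rewrite mxformDl !mxformDr !mxformZl !mxformZr (mxformC x y S_sym); lra.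
Qed.

Lemma mxform1_mul_le x :
  mxform 1%:M (S *m x) (S *m x) <= (\sum_i \sum_j `|S i j|) * mxform S x x.
Proof.
set z := S *m x; set N := mxform 1%:M z z; set L := \sum_i _.
have N_ge0 : 0 <= N := mxform1_ge0 z.
have Q_ge0 : 0 <= mxform S x x := S_psd x.
have N_Sx : N = mxform S z x by rewrite /N /mxform mulmx1 /z mulmxA.
have : N ^+ 2 <= L * N * mxform S x x.
  rewrite {1}N_Sx; apply: le_trans (mxform_cauchy_schwarz z x) _.
  exact: ler_wpM2r (mxform_le_abs_sum S z).
have L_ge0 : 0 <= L by do 2!apply: sumr_ge0 => ? _.
have [N0|N_neq0] := eqVneq N 0; first by rewrite N0 mulr_ge0.
have : 0 < N by rewrite lt_def N_neq0.
nra.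
Qed.

End Psd.
End MxForm.

Section EuclideanNorm.
Variables (R : realType) (k : nat).
Implicit Types (u v : 'cV[R]_k).

Lemma enormE v : enorm v = Num.sqrt (mxform 1%:M v v).
Proof.
by rewrite /enorm mxform1E; congr Num.sqrt; apply: eq_bigr => a _; rewrite expr2.
Qed.

Lemma enorm_ge0 v : 0 <= enorm v.
Proof. exact: sqrtr_ge0. Qed.

Lemma sqr_enorm v : enorm v ^+ 2 = mxform 1%:M v v.
Proof. by rewrite enormE sqr_sqrtr ?mxform1_ge0. Qed.

Lemma enorm_cauchy_schwarz u v : mxform 1%:M u v <= enorm u * enorm v.
Proof.
rewrite !enormE -sqrtrM ?mxform1_ge0 //; apply: le_trans (ler_norm _) _.
rewrite -sqrtr_sqr; apply: ler_wsqrtr.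
by apply: mxform_cauchy_schwarz; [exact: trmx1 | exact: mxform1_ge0].
Qed.

Lemma enormZ s v : enorm (s *: v) = `|s| * enorm v.
Proof.
by rewrite !enormE mxformZl mxformZr mulrA -expr2 sqrtrM ?sqr_ge0 // sqrtr_sqr.
Qed.

Lemma enormN v : enorm (- v) = enorm v.
Proof. by rewrite -scaleN1r enormZ normrN1 mul1r. Qed.

Lemma enorm0 : enorm (0 : 'cV[R]_k) = 0.
Proof. by rewrite -(scale0r 0) enormZ normr0 mul0r. Qed.

Lemma enormD u v : enorm (u + v) <= enorm u + enorm v.
Proof.
have uv_ge0 : 0 <= enorm u + enorm v by rewrite addr_ge0 ?enorm_ge0.
rewrite -(ger0_norm uv_ge0) -sqrtr_sqr enormE; apply: ler_wsqrtr.
rewrite mxformDl !mxformDr (mxformC v u (trmx1 _ _)) -!sqr_enorm.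
have := enorm_cauchy_schwarz u v; lra.
Qed.

Lemma ler_enorm_dist u v : `|enorm u - enorm v| <= enorm (u - v).
Proof.
have := enormD (u - v) v; have := enormD (v - u) u.
rewrite !subrK -opprB enormN ler_norml; lra.
Qed.

Lemma ler_enorm_sum (I : finType) (P : pred I) (F : I -> 'cV[R]_k) :
  enorm (\sum_(i | P i) F i) <= \sum_(i | P i) enorm (F i).
Proof.
elim/big_ind2: _ => [|x1 x2 y1 y2 le1 le2|//]; first by rewrite enorm0.
by apply: le_trans (enormD _ _) _; apply: lerD.
Qed.

Definition normalize v := (enorm v)^-1 *: v.

(* [normalize 0 = 0], because [0^-1 = 0]. *)
Lemma enorm_normalize_le1 v : enorm (normalize v) <= 1.
Proof.
rewrite enormZ ger0_norm ?invr_ge0 ?enorm_ge0 //.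
have [->|v_neq0] := eqVneq (enorm v) 0; first by rewrite mulr0.
by rewrite mulVf.
Qed.

Lemma enorm_normalizeB u v (a : R) : enorm v = 1 -> 0 <= a -> 0 < enorm u ->
  enorm (normalize u - v) <= 2 * enorm (u - a *: v) / enorm u.
Proof.
move=> v1 a_ge0 u_gt0; set N := enorm u.
have -> : normalize u - v = N^-1 *: ((u - a *: v) + (a - N) *: v).
  by apply/colP => b; rewrite /normalize -/N !mxE; field; rewrite gt_eqF.
rewrite enormZ ger0_norm ?invr_ge0 ?enorm_ge0 // mulrC ler_pM2r ?invr_gt0 //.
apply: le_trans (enormD _ _) _; rewrite enormZ v1 mulr1.
have := ler_enorm_dist (a *: v) u.
rewrite enormZ (ger0_norm a_ge0) v1 mulr1 -/N -[a *: v - u]opprB enormN; lra.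
Qed.

End EuclideanNorm.

Lemma sum_enorm_col_sqr (R : realType) p q (M : 'M[R]_(p, q)) :
  \sum_i enorm (col i M) ^+ 2 = \sum_a mxform 1%:M (row a M)^T (row a M)^T.
Proof.
under eq_bigr => i _ do rewrite sqr_enorm mxform1E.
under [RHS]eq_bigr => a _ do rewrite mxform1E.
by rewrite exchange_big; apply: eq_bigr => a _; apply: eq_bigr => i _; rewrite !mxE.
Qed.

Lemma enorm_col_le (R : realType) p q (M : 'M[R]_(p, q)) i :
  enorm (col i M) <= Num.sqrt (\sum_j enorm (col j M) ^+ 2).
Proof.
rewrite -(ger0_norm (enorm_ge0 _)) -sqrtr_sqr; apply: ler_wsqrtr.
by rewrite (bigD1 i) //= lerDl sumr_ge0 // => j _; rewrite sqr_ge0.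
Qed.

Section Gram.
Variables (R : realType) (n : nat).

Definition gram p (V : 'M[R]_(p, n)) : 'M[R]_n := V^T *m V.

Lemma gramE p (V : 'M[R]_(p, n)) i j : gram V i j = \sum_a V a i * V a j.
Proof. by rewrite mxE; apply: eq_bigr => a _; rewrite mxE. Qed.

Lemma gramC p (V : 'M[R]_(p, n)) i j : gram V i j = gram V j i.
Proof. by rewrite !gramE; apply: eq_bigr => a _; rewrite mulrC. Qed.

Lemma gram_psd p (V : 'M[R]_(p, n)) : psd (gram V).
Proof.
split; first by rewrite trmx_mul trmxK.
move=> z; have -> : z^T *m gram V *m z = (V *m z)^T *m 1%:M *m (V *m z).
  by rewrite mulmx1 trmx_mul !mulmxA.
exact: mxform1_ge0.
Qed.

Lemma gram_col_mx p q (A : 'M[R]_(p, n)) (B : 'M[R]_(q, n)) :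
  gram (col_mx A B) = gram A + gram B.
Proof. by rewrite /gram tr_col_mx mul_row_col. Qed.

Lemma gram_mul_diag p (V : 'M[R]_(p, n)) d i j :
  gram (V *m diag_mx d) i j = d 0 i * d 0 j * gram V i j.
Proof.
by rewrite !gramE mulr_sumr; apply: eq_bigr => a _; rewrite mul_mx_diag !mxE; ring.
Qed.

Lemma gram_row (r : 'rV[R]_n) i j : gram r i j = r 0 i * r 0 j.
Proof. by rewrite gramE big_ord1. Qed.

Lemma gram_unit_cols k (V : 'M[R]_(k, n)) i : unit_cols V -> gram V i i = 1.
Proof.
move=> /(_ i) e1; rewrite gramE -(expr1n _ 2) -e1 sqr_enorm mxform1E.
by apply: eq_bigr => a _; rewrite !mxE.
Qed.

End Gram.

Lemma invr1D_bounds (R : realFieldType) (x : R) : 0 <= x ->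
  0 < (1 + x)^-1 <= 1 /\ 1 - (1 + x)^-1 <= x.
Proof.
move=> x_ge0; have den : 0 < 1 + x by rewrite ltr_pwDl.
have inv : (1 + x)^-1 * (1 + x) = 1 by rewrite mulVf ?gt_eqF.
have h_gt0 : 0 < (1 + x)^-1 by rewrite invr_gt0.
have h_le1 : (1 + x)^-1 <= 1 by nra.
by rewrite h_gt0 h_le1; split=> //; nra.
Qed.

Section Certificate.
Variables (R : realType) (k n : nat) (C : 'M[R]_n) (Vs : 'M[R]_(k, n)).
Hypotheses (C_sym : C^T = C) (Vs_opt : sdp_opt C Vs).

(* The dual variable of the constraint [X i i = 1]. *)
Definition multiplier i : R := - \sum_j C i j * gram Vs i j.

Definition certificate : 'M[R]_n := C + diag_mx (\row_i multiplier i).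

Local Notation S := certificate.

Lemma certificate_sym : S^T = S.
Proof. by rewrite linearD /= tr_diag_mx C_sym. Qed.

Lemma certificate_diag i : S i i = C i i + multiplier i.
Proof. by rewrite !mxE eqxx mulr1n. Qed.

Lemma mxform_certificate u : mxform S u u =
  \sum_i \sum_j C i j * (u i 0 * u j 0) + \sum_i multiplier i * u i 0 ^+ 2.
Proof.
rewrite mxformD mxformE mxform_diag; congr (_ + _).
  by apply: eq_bigr => i _; apply: eq_bigr => j _; ring.
by apply: eq_bigr => i _; rewrite mxE.
Qed.

Lemma fobj_opt : fobj C Vs = - \sum_i multiplier i.
Proof. by rewrite sumrN opprK. Qed.

Lemma fobj_opt_le (V : 'M[R]_(k, n)) : unit_cols V -> fobj C Vs <= fobj C V.
Proof.
move=> V1; have [_ opt] := Vs_opt.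
exact: opt (gram_psd V) (fun i => gram_unit_cols i V1).
Qed.

Lemma fobj_gap (V : 'M[R]_(k, n)) : unit_cols V ->
  fobj C V - fobj C Vs = \sum_a mxform S (row a V)^T (row a V)^T.
Proof.
move=> V1; rewrite fobj_opt opprK.
under [RHS]eq_bigr => a _ do rewrite mxform_certificate.
rewrite big_split /=; congr (_ + _).
  rewrite [RHS]exchange_big; apply: eq_bigr => i _.
  rewrite [RHS]exchange_big; apply: eq_bigr => j _.
  by rewrite gramE mulr_sumr; apply: eq_bigr => a _; rewrite !mxE.
rewrite [RHS]exchange_big; apply: eq_bigr => i _.
rewrite -mulr_sumr -[LHS]mulr1 -(gram_unit_cols i V1) gramE.
by congr (_ * _); apply: eq_bigr => a _; rewrite !mxE expr2.
Qed.

Section FeasibleCurve.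
Variable u : 'cV[R]_n.

Let w i := u i 0 ^+ 2.
Let b i j := 2 * (u i 0 * u j 0) - (w i + w j) * gram Vs i j.
Let damp (t : R) i := (1 + t ^+ 2 * w i)^-1.
Let variation t := \sum_i \sum_j damp t i * damp t j * (C i j * b i j).
(* (1 - t^2 w)^2 + (2 t u)^2 = (1 + t^2 w)^2 keeps the columns of [curve t]
   unit, and [curve 0] is [Vs] with a zero row appended. *)
Let curve t : 'M_(k + 1, n) :=
  col_mx (Vs *m diag_mx (\row_i ((1 - t ^+ 2 * w i) * damp t i)))
         (\row_i (2 * t * u i 0 * damp t i)).

Let damp_den_gt0 t i : 0 < 1 + t ^+ 2 * w i.
Proof. by rewrite ltr_pwDl // mulr_ge0 ?sqr_ge0. Qed.

Let damp0 i : damp 0 i = 1.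
Proof. by rewrite /damp expr0n mul0r addr0 invr1. Qed.

Lemma gram_curve t i j :
  gram (curve t) i j = gram Vs i j + 2 * t ^+ 2 * (damp t i * damp t j * b i j).
Proof.
rewrite gram_col_mx [X in X = _]mxE gram_mul_diag gram_row ![(\row__ _) 0 _]mxE.
have := damp_den_gt0 t i; have := damp_den_gt0 t j.
rewrite /b /damp /w => tj ti; field.
by rewrite !exprMn !gt_eqF.
Qed.

Lemma gram_curve_diag t i : gram (curve t) i i = 1.
Proof.
by rewrite gram_curve /b (gram_unit_cols i (proj1 Vs_opt)) /w; ring.
Qed.

Lemma frob_curve t : frob C (gram (curve t)) = fobj C Vs + 2 * t ^+ 2 * variation t.
Proof.
rewrite /fobj /frob /variation mulr_sumr -big_split; apply: eq_bigr => i _ /=.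
rewrite mulr_sumr -big_split; apply: eq_bigr => j _ /=.
rewrite gram_curve; ring.
Qed.

Lemma variation_ge0 t : 0 < t -> 0 <= variation t.
Proof.
move=> t_gt0; have [_ opt] := Vs_opt.
have := opt _ (gram_psd (curve t)) (gram_curve_diag t).
by rewrite frob_curve lerDl pmulr_rge0 // mulr_gt0 // exprn_gt0.
Qed.

Lemma variation0 : variation 0 = 2 * mxform S u u.
Proof.
have swap : \sum_i \sum_j C i j * (w j * gram Vs i j) =
            \sum_i \sum_j C i j * (w i * gram Vs i j).
  rewrite exchange_big; apply: eq_bigr => i _; apply: eq_bigr => j _.
  by rewrite gramC (mx_symE _ _ C_sym).
have multE : \sum_i \sum_j C i j * (w i * gram Vs i j) = - \sum_i multiplier i * w i.
  rewrite -sumrN; apply: eq_bigr => i _; rewrite mulNr opprK mulr_suml.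
  by apply: eq_bigr => j _; ring.
have -> : variation 0 = \sum_i \sum_j (2 * (C i j * (u i 0 * u j 0))
    - C i j * (w i * gram Vs i j) - C i j * (w j * gram Vs i j)).
  by apply: eq_bigr => i _; apply: eq_bigr => j _; rewrite !damp0 /b; ring.
under eq_bigr => i _ do rewrite !sumrB -mulr_sumr.
by rewrite !sumrB -mulr_sumr swap multE mxform_certificate; ring.
Qed.

Lemma variation_approx t :
  variation t - t ^+ 2 * (\sum_i \sum_j `|C i j * b i j| * (w i + w j))
  <= variation 0.
Proof.
rewrite mulr_sumr -sumrB; apply: ler_sum => i _.
rewrite mulr_sumr -sumrB; apply: ler_sum => j _; rewrite !damp0 mul1r.
have damp_bounds l : 0 < damp t l <= 1 /\ 1 - damp t l <= t ^+ 2 * w l.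
  by apply: invr1D_bounds; rewrite mulr_ge0 ?sqr_ge0.
have [/andP[hi0 hi1] hi] := damp_bounds i.
have [/andP[hj0 hj1] hj] := damp_bounds j.
have p_bounds : 0 <= 1 - damp t i * damp t j <= t ^+ 2 * w i + t ^+ 2 * w j.
  by apply/andP; split; nra.
set a := C i j * b i j.
have [p_ge0 p_le] := andP p_bounds.
have := ler_wpM2l p_ge0 (ler_norm (- a)); rewrite normrN.
have := ler_wpM2r (normr_ge0 a) p_le.
nra.
Qed.

Lemma variation0_ge0 : 0 <= variation 0.
Proof.
pose K := \sum_i \sum_j `|C i j * b i j| * (w i + w j).
have K_ge0 : 0 <= K.
  by do 2!apply: sumr_ge0 => ? _; rewrite mulr_ge0 ?addr_ge0 ?sqr_ge0.
apply/ler_addgt0Pr => e e_gt0.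
pose r := e / (K + 1).
have r_gt0 : 0 < r by rewrite divr_gt0 // ltr_wpDl.
have rK : r * K <= e.
  by rewrite mulrAC ler_pdivrMr ?ltr_wpDl //; nra.
have s_gt0 : 0 < Num.sqrt r by rewrite sqrtr_gt0.
have := variation_approx (Num.sqrt r); have := variation_ge0 s_gt0.
rewrite sqr_sqrtr -/K; [lra | exact: ltW].
Qed.

Lemma certificate_psd : 0 <= mxform S u u.
Proof. by have := variation0_ge0; rewrite variation0 pmulr_rge0. Qed.

End FeasibleCurve.

Lemma multiplier_ge0 i : C i i = 0 -> 0 <= multiplier i.
Proof.
move=> Cii0; have := certificate_psd (delta_mx i 0).
by rewrite mxform_delta certificate_diag Cii0 add0r.
Qed.

Lemma col_mul_certificate (V : 'M[R]_(k, n)) i :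
  col i (V *m S) = \sum_j C i j *: col j V + multiplier i *: col i V.
Proof.
apply/colP => a; rewrite !mxE summxE.
under eq_bigr => j _ do rewrite !mxE mulrDr.
rewrite big_split /=; congr (_ + _).
  by apply: eq_bigr => j _; rewrite !mxE (mx_symE _ _ C_sym) mulrC.
rewrite (bigD1 i) //= eqxx mulr1n big1 ?addr0 1?mulrC // => j /negbTE ji.
by rewrite ji mulr0n mulr0.
Qed.

Lemma sum_enorm_col_certificate_le (V : 'M[R]_(k, n)) : unit_cols V ->
  \sum_i enorm (col i (V *m S)) ^+ 2
  <= (\sum_i \sum_j `|S i j|) * (fobj C V - fobj C Vs).
Proof.
move=> V1; rewrite sum_enorm_col_sqr fobj_gap // mulr_sumr; apply: ler_sum => a _.
rewrite row_mul trmx_mul certificate_sym.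
exact: mxform1_mul_le certificate_sym certificate_psd _.
Qed.

End Certificate.

Lemma discrete_gronwall (R : realDomainType) n (q : 'I_n -> R)
    (c : 'I_n -> 'I_n -> R) (E X : R) :
  0 <= E -> (forall i j, 0 <= c i j) -> (forall i, \sum_j c i j <= X) ->
  (forall i, q i <= E + \sum_(j < n | (j < i)%N) c i j * q j) ->
  forall i, q i <= (1 + X) ^+ i * E.
Proof.
move=> E_ge0 c_ge0 c_le q_le.
suff: forall m (i : 'I_n), i = m :> nat -> q i <= (1 + X) ^+ m * E.
  by move=> + i; apply.
elim/ltn_ind => m IH i im; apply: le_trans (q_le i) _.
have X_ge0 : 0 <= X := le_trans (sumr_ge0 _ (fun j _ => c_ge0 i j)) (c_le i).
case: m im IH => [|m] im IH.
  by rewrite big1 ?addr0 ?expr0 ?mul1r // => j; rewrite im ltn0.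
set P := (1 + X) ^+ m.
have P_ge1 : 1 <= P by rewrite exprn_ege1 // lerDl.
have qj (j : 'I_n) : (j < i)%N -> c i j * q j <= c i j * (P * E).
  move=> ji; apply: ler_wpM2l => //; apply: le_trans (IH j _ j erefl) _.
    by rewrite -im.
  by apply: ler_wpM2r => //; apply: ler_weXn2l; rewrite ?lerDl // -ltnS -im.
apply: le_trans (lerD (lexx E) (ler_sum _ qj)) _; rewrite -mulr_suml.
have s_le : \sum_(j < n | (j < i)%N) c i j <= X.
  apply: le_trans (c_le i).
  by rewrite [X in _ <= X](bigID (fun j : 'I_n => (j < i)%N)) /= lerDl sumr_ge0.
have := ler_wpM2r (mulr_ge0 (le_trans ler01 P_ge1) E_ge0) s_le.
have := ler_peMl E_ge0 P_ge1.
rewrite exprS -/P; move: (\sum_(j < n | _) _) => s; clearbody P; lra.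
Qed.

Lemma gvecE (R : realType) k n (C : 'M[R]_n) (W : 'M[R]_(k, n)) i :
  C i i = 0 -> gvec C W i = \sum_j C i j *: col j W.
Proof. by move=> Cii0; rewrite /gvec [RHS](bigD1 i) //= Cii0 scale0r add0r. Qed.

Lemma maxcol1_ge0 (R : realType) n (C : 'M[R]_n) : 0 <= maxcol1 C.
Proof.
apply: (big_ind (fun x => 0 <= x)) => // [x y x_ge0 _|i _].
  by rewrite le_max x_ge0.
exact: sumr_ge0.
Qed.

Lemma sum_abs_row_le_maxcol1 (R : realType) n (C : 'M[R]_n) i :
  C^T = C -> \sum_j `|C i j| <= maxcol1 C.
Proof.
move=> C_sym; under eq_bigr => j _ do rewrite (mx_symE _ _ C_sym).
exact: (le_bigmax _ (fun i => \sum_j `|C j i|) i).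
Qed.

Lemma enorm_gvec_le (R : realType) k n (C : 'M[R]_n) (W : 'M[R]_(k, n)) i :
  C^T = C -> C i i = 0 -> (forall j, enorm (col j W) <= 1) ->
  enorm (gvec C W i) <= maxcol1 C.
Proof.
move=> C_sym Cii0 W1; rewrite gvecE //; apply: le_trans (ler_enorm_sum _ _) _.
apply: le_trans (sum_abs_row_le_maxcol1 i C_sym); apply: ler_sum => j _.
by rewrite enormZ ler_piMr.
Qed.

Section CyclicPass.
Variables (R : realType) (k n : nat) (rule : 'cV[R]_k -> 'cV[R]_k -> 'cV[R]_k).
Variables (C : 'M[R]_n) (V : 'M[R]_(k, n)).

Definition update i : 'cV[R]_k := rule (col i (state rule C V i)) (gpass rule C V i).

Lemma ynormE i : ynorm rule C V i = enorm (update i).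
Proof. by []. Qed.

Lemma col_step W i j : col j (step rule C W i) =
  if j == i then normalize (rule (col i W) (gvec C W i)) else col j W.
Proof. by apply/colP => a; rewrite !mxE; case: eqP; rewrite !mxE. Qed.

Let partial m := foldl (step rule C) V (take m (enum 'I_n)).

Let partial_succ (i : 'I_n) : partial i.+1 = step rule C (state rule C V i) i.
Proof.
by rewrite /partial (take_nth i) ?size_enum_ord // foldl_rcons nth_ord_enum.
Qed.

Let col_partial m j : (m <= n)%N ->
  col j (partial m) = if (j < m)%N then col j (partial j.+1) else col j V.
Proof.
elim: m => [|m IH] m_le; first by rewrite /partial take0.
rewrite (partial_succ (Ordinal m_le)) col_step.
case: eqP => [->|/eqP jm]; first by rewrite ltnSn partial_succ col_step eqxx.
rewrite IH; last exact: ltnW.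
rewrite ltnS [in RHS]leq_eqVlt.
suff /negbTE-> : val j != m by [].
by apply: contra jm => /eqP ji; apply/eqP/val_inj.
Qed.

Lemma col_state i j : col j (state rule C V i) =
  if (j < i)%N then normalize (update j) else col j V.
Proof.
rewrite -/(partial i) col_partial; last exact: ltnW.
by case: ifP => // _; rewrite partial_succ col_step eqxx.
Qed.

Lemma col_state_self i : col i (state rule C V i) = col i V.
Proof. by rewrite col_state ltnn. Qed.

Lemma enorm_col_state_le1 i j : unit_cols V -> enorm (col j (state rule C V i)) <= 1.
Proof.
by move=> V1; rewrite col_state; case: ifP => _; rewrite ?V1 ?enorm_normalize_le1.
Qed.

End CyclicPass.

Section PerturbedPass.
Variables (R : realType) (k n : nat) (C : 'M[R]_n) (Vs : 'M[R]_(k, n)).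
Variables (rule : 'cV[R]_k -> 'cV[R]_k -> 'cV[R]_k) (a : 'I_n -> R) (kappa m0 : R).
Hypotheses (C_sym : C^T = C) (C_diag0 : forall i, C i i = 0) (Vs_opt : sdp_opt C Vs).
Hypotheses (kappa_gt0 : 0 < kappa) (m0_gt0 : 0 < m0) (a_ge0 : forall i, 0 <= a i).
(* M has a = λ and κ = 1; M_θ has a = 1 + θ λ and κ = θ. *)
Hypothesis rule_form :
  forall i v g, rule v g = a i *: v - kappa *: (g + multiplier C Vs i *: v).

Local Notation S := (certificate C Vs).
Let X := 2 * kappa / m0 * maxcol1 C.
Let B := kappa * (1 + X) ^+ n.

Let rate_ge0 : 0 <= 2 * kappa / m0.
Proof. by rewrite divr_ge0 ?mulr_ge0 // ltW. Qed.

Section Pass.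
Variable V : 'M[R]_(k, n).
Hypotheses (V1 : unit_cols V) (V_low : forall i, m0 <= ynorm rule C V i).

Let resid i := gpass rule C V i + multiplier C Vs i *: col i V.
Let E := Num.sqrt (\sum_i enorm (col i (V *m S)) ^+ 2).

Let update_resid i : update rule C V i = a i *: col i V - kappa *: resid i.
Proof. by rewrite /update (rule_form i) col_state_self. Qed.

Lemma ynorm_dev i : `|ynorm rule C V i - a i| <= kappa * enorm (resid i).
Proof.
have := ler_enorm_dist (update rule C V i) (a i *: col i V).
rewrite enormZ (ger0_norm (a_ge0 i)) V1 mulr1 -ynormE update_resid.
by rewrite addrAC subrr add0r enormN enormZ (gtr0_norm kappa_gt0).
Qed.

Lemma col_update_dev i : enorm (normalize (update rule C V i) - col i V)
  <= 2 * kappa / m0 * enorm (resid i).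
Proof.
have y_ge := V_low i; rewrite ynormE in y_ge.
have y_gt0 := lt_le_trans m0_gt0 y_ge.
apply: le_trans (enorm_normalizeB (V1 i) (a_ge0 i) y_gt0) _.
have -> : update rule C V i - a i *: col i V = - (kappa *: resid i).
  by rewrite update_resid addrAC subrr add0r.
rewrite enormN enormZ (gtr0_norm kappa_gt0).
have inv_le : (enorm (update rule C V i))^-1 <= m0^-1 by rewrite lef_pV2 ?posrE.
have := ler_wpM2l (mulr_ge0 (ltW kappa_gt0) (enorm_ge0 (resid i))) inv_le.
lra.
Qed.

Lemma resid_le i : enorm (resid i) <= enorm (col i (V *m S)) +
  \sum_(j < n | (j < i)%N) `|C i j| * enorm (normalize (update rule C V j) - col j V).
Proof.
have shift : \sum_j C i j *: col j (state rule C V i) = \sum_j C i j *: col j V +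
    \sum_(j < n | (j < i)%N) C i j *: (normalize (update rule C V j) - col j V).
  rewrite [X in _ = _ + X]big_mkcond -big_split /=; apply: eq_bigr => j _.
  by rewrite col_state; case: ifP => _; rewrite ?addr0 // scalerBr addrC subrK.
rewrite /resid /gpass gvecE // shift addrAC -col_mul_certificate //.
apply: le_trans (enormD _ _) _; rewrite lerD2l.
by apply: le_trans (ler_enorm_sum _ _) _; apply: ler_sum => j _; rewrite enormZ.
Qed.

Lemma resid_geometric i : enorm (resid i) <= (1 + X) ^+ i * E.
Proof.
apply: (discrete_gronwall (q := fun i => enorm (resid i))
  (c := fun i j => 2 * kappa / m0 * `|C i j|)) => [|i' j|i'|i'].
- exact: sqrtr_ge0.
- exact: mulr_ge0.
- by rewrite -mulr_sumr ler_wpM2l ?sum_abs_row_le_maxcol1.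
apply: le_trans (resid_le i') _; apply: lerD; first exact: enorm_col_le.
by apply: ler_sum => j _; rewrite mulrC mulrAC ler_wpM2r ?col_update_dev.
Qed.

Lemma ynorm_dev_le i : `|ynorm rule C V i - a i| <= B * E.
Proof.
apply: le_trans (ynorm_dev i) _; rewrite -mulrA ler_wpM2l ?(ltW kappa_gt0) //.
apply: le_trans (resid_geometric i) _; rewrite ler_wpM2r ?sqrtr_ge0 //.
by apply: ler_weXn2l; [rewrite lerDl mulr_ge0 ?maxcol1_ge0 | exact: ltnW].
Qed.

End Pass.

Hypothesis Vs_low : forall i, m0 <= ynorm rule C Vs i.

Lemma ynorm_opt i : ynorm rule C Vs i = a i.
Proof.
have E0 : \sum_j enorm (col j (Vs *m S)) ^+ 2 = 0.
  apply/eqP; rewrite eq_le sumr_ge0 ?andbT => [|j _]; last by rewrite sqr_ge0.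
  have := sum_enorm_col_certificate_le C_sym Vs_opt (proj1 Vs_opt).
  by rewrite subrr mulr0.
have := ynorm_dev_le (proj1 Vs_opt) Vs_low i; rewrite E0 sqrtr0 mulr0.
by rewrite normr_le0 subr_eq0 => /eqP.
Qed.

Lemma sqdist_ynorm_le : exists tau, 0 < tau /\
  forall V, unit_cols V -> (forall i, m0 <= ynorm rule C V i) ->
    sqdist (ynorm rule C V) (ynorm rule C Vs) <= tau * (fobj C V - fobj C Vs).
Proof.
pose L := \sum_i \sum_j `|S i j|.
have L_ge0 : 0 <= L by do 2!apply: sumr_ge0 => ? _.
exists (n%:R * B ^+ 2 * L + 1); split.
  by rewrite ltr_wpDl ?ltr01 // mulr_ge0 // mulr_ge0 ?sqr_ge0.
move=> V V1 V_low; set gap := fobj C V - fobj C Vs.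
have gap_ge0 : 0 <= gap by rewrite subr_ge0 fobj_opt_le.
have dev i : (ynorm rule C V i - ynorm rule C Vs i) ^+ 2 <= B ^+ 2 * (L * gap).
  rewrite ynorm_opt -real_normK ?num_real //.
  have d_le := ynorm_dev_le V1 V_low i.
  apply: le_trans (ler_pM (normr_ge0 _) (normr_ge0 _) d_le d_le) _.
  rewrite -expr2 exprMn sqr_sqrtr ?sumr_ge0 // => [|j _]; last by rewrite sqr_ge0.
  by rewrite ler_wpM2l ?sqr_ge0 ?sum_enorm_col_certificate_le.
rewrite /sqdist; apply: le_trans (ler_sum _ (fun i _ => dev i)) _.
rewrite sumr_const card_ord -mulr_natl; lra.
Qed.

End PerturbedPass.

Section Methods.
Variables (R : realType) (k n : nat) (C : 'M[R]_n) (Vs : 'M[R]_(k, n)).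

Lemma rule_M_form i (v g : 'cV[R]_k) :
  rule_M v g = multiplier C Vs i *: v - 1 *: (g + multiplier C Vs i *: v).
Proof. by apply/colP => b; rewrite !mxE; ring. Qed.

Lemma rule_Mtheta_form (theta : R) i (v g : 'cV[R]_k) :
  rule_Mtheta theta v g =
  (1 + theta * multiplier C Vs i) *: v - theta *: (g + multiplier C Vs i *: v).
Proof. by apply/colP => b; rewrite !mxE; ring. Qed.

Lemma ynorm_M_ge (V : 'M[R]_(k, n)) delta :
  nondeg C V delta -> forall i, delta <= ynorm (@rule_M R k) C V i.
Proof.
by move=> V_nondeg i; rewrite ynormE /update /rule_M enormN; apply: V_nondeg.
Qed.

Lemma ynorm_Mtheta_ge (theta : R) :
  C^T = C -> (forall i, C i i = 0) -> 0 < theta ->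
  forall V : 'M[R]_(k, n), unit_cols V ->
  forall i, 1 - theta * maxcol1 C <= ynorm (@rule_Mtheta R theta k) C V i.
Proof.
move=> C_sym C_diag0 theta_gt0 V V1 i.
set g := gpass (@rule_Mtheta R theta k) C V i.
have g_le : enorm g <= maxcol1 C.
  by apply: enorm_gvec_le C_sym (C_diag0 i) _ => j; apply: enorm_col_state_le1.
have := ler_enorm_dist (col i V) (theta *: g).
rewrite V1 enormZ (gtr0_norm theta_gt0).
rewrite ynormE /update col_state_self -/g /rule_Mtheta.
have := ler_norm (1 - theta * enorm g); have := ler_wpM2l (ltW theta_gt0) g_le.
lra.
Qed.

End Methods.

Theorem lemma19 (R : realType) (k n : nat) (C : 'M[R]_n) (Vs : 'M[R]_(k, n)) :
  C^T = C -> (forall i, C i i = 0) -> sdp_opt C Vs ->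
  (* Mixing method M under non-degeneracy *)
  (forall delta : R, 0 < delta -> nondeg C Vs delta ->
     exists tau : R, 0 < tau /\
       forall V : 'M[R]_(k, n), unit_cols V -> nondeg C V delta ->
         sqdist (ynorm (@rule_M R k) C V) (ynorm (@rule_M R k) C Vs)
           <= tau * (fobj C V - fobj C Vs)) /\
  (* step-size version M_theta, theta in (0, 1 / max_i ||c_i||_1) *)
  (forall theta : R, 0 < theta -> theta * maxcol1 C < 1 ->
     exists tau : R, 0 < tau /\
       forall V : 'M[R]_(k, n), unit_cols V ->
         sqdist (ynorm (@rule_Mtheta R theta k) C V) (ynorm (@rule_Mtheta R theta k) C Vs)
           <= tau * (fobj C V - fobj C Vs)).
Proof.
move=> C_sym C_diag0 Vs_opt.
have mult_ge0 i : 0 <= multiplier C Vs i := multiplier_ge0 C_sym Vs_opt (C_diag0 i).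
split=> [delta delta_gt0 Vs_nondeg | theta theta_gt0 theta_lt1].
  have [tau [tau_gt0 le_tau]] := sqdist_ynorm_le C_sym C_diag0 Vs_opt ltr01
    delta_gt0 mult_ge0 (@rule_M_form _ _ _ C Vs) (ynorm_M_ge Vs_nondeg).
  by exists tau; split=> // V V1 /ynorm_M_ge; apply: le_tau.
have a_ge0 i : 0 <= 1 + theta * multiplier C Vs i.
  by rewrite addr_ge0 // mulr_ge0 // ltW.
have Mtheta_ge := @ynorm_Mtheta_ge R k n C theta C_sym C_diag0 theta_gt0.
have m0_gt0 : 0 < 1 - theta * maxcol1 C by rewrite subr_gt0.
have [tau [tau_gt0 le_tau]] := sqdist_ynorm_le C_sym C_diag0 Vs_opt theta_gt0
  m0_gt0 a_ge0 (@rule_Mtheta_form _ _ _ C Vs theta)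
  (Mtheta_ge _ (proj1 Vs_opt)).
by exists tau; split=> // V V1; apply: le_tau V1 (Mtheta_ge _ V1).
Qed.
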